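(* Let $Y$ be a continuous random variable supported on $[0,\infty)$ whose density $f$ satisfies $f(t)\le Ce^{-\lambda t}$ for all $t\ge0$, for some $C,\lambda>0$. There exist constants $S,\delta>0$, depending only on $C,\lambda$, such that $|\mathbb{E}[e^{-sY}]-1| \ge \delta|s|$ for all complex $s$ with $|s|\le S$. *)

From HB Require Import structures.
From mathcomp Require Import all_boot all_order all_algebra.
From mathcomp Require Import all_classical all_reals all_analysis.
From mathcomp Require Import complex.
Set Implicit Arguments. Unset Strict Implicit. Unset Printing Implicit Defensive.
Import Order.TTheory GRing.Theory Num.Theory.
Local Open Scope ring_scope.
Local Open Scope classical_set_scope.

Definition is_density_on_nonneg (R : realType) (f : R -> R) : Prop :=
  [/\ measurable_fun setT f,
      (forall t, 0 <= f t),
      (forall t, t < 0 -> f t = 0),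
      lebesgue_measure.-integrable setT (EFin \o f) &
      ((\int[lebesgue_measure]_(t in setT) (f t)%:E)%E = 1%E)].

(* E[e^{-sY}] = \int_R e^{-s t} f(t) dt for complex s = a + i b:
   e^{-s t} = e^{-a t} (cos (b t) - i sin (b t)). *)
Definition laplace (R : realType) (f : R -> R) (s : R[i]) : R[i] :=
  let a := complex.Re s in let b := complex.Im s in
  complex.Complex
  (Rintegral lebesgue_measure setT (fun t => expR (- (a * t)) * cos (b * t) * f t))
  (- Rintegral lebesgue_measure setT (fun t => expR (- (a * t)) * sin (b * t) * f t)).

From HB Require Import structures.
From mathcomp Require Import all_boot all_order all_algebra.
From mathcomp Require Import all_classical all_reals all_analysis.
From mathcomp Require Import complex.
From mathcomp Require Import ring lra measurable_realfun exponential_distribution.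
Import Order.TTheory GRing.Theory Num.Theory numFieldTopology.Exports.
Set Implicit Arguments. Unset Strict Implicit. Unset Printing Implicit Defensive.

(* To first order e^(-st) = 1 - st, with remainder at most 3 |s|^2 t^2 e^(|Re s| t).
   When |Re s| <= lambda / 2 this weight is integrable against a density with
   tail C e^(-lambda t), so E[e^(-sY)] - 1 = - s E[Y] + O(|s|^2) with a constant
   depending only on C and lambda.  A density bounded by C cannot put much mass
   near 0, so E[Y] >= 1 / (4 e C); the linear term therefore dominates for small
   |s|, giving |E[e^(-sY)] - 1| >= |s| / (8 e C). *)

Local Open Scope ring_scope.
Local Open Scope classical_set_scope.
Local Open Scope complex_scope.

Section elementary_bounds.
Variable R : realType.
Implicit Types a b t y : R.

Lemma normr_expRB1_le y : `|expR y - 1| <= `|y| * expR `|y|.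
Proof.
have := expR_ge1Dx y; have := expR_ge1Dx (- y).
have := expRxMexpNx_1 y; have := expR_gt0 y; have := expR_gt0 (- y).
have [y0|y0] := leP 0 y.
- rewrite ger0_norm ?(ger0_norm y0); last by rewrite subr_ge0 -expR0 ler_expR.
  nra.
- rewrite ler0_norm ?(ltr0_norm y0); last by rewrite subr_le0 expR_le1 ltW.
  nra.
Qed.

Lemma normr_expRB1Bx_le y : `|expR y - 1 - y| <= y ^+ 2 * expR `|y|.
Proof.
have := expR_ge1Dx y; have := expR_ge1Dx (- y).
have := expRxMexpNx_1 y; have := expR_gt0 y; have := expR_gt0 (- y).
rewrite ger0_norm; last by have := expR_ge1Dx y; lra.
have [y0|y0] := leP 0 y; first by rewrite (ger0_norm y0); nra.
rewrite (ltr0_norm y0).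
have : expR y <= 1 by rewrite expR_le1 ltW.
nra.
Qed.

Lemma normr_sin_le y : `|sin y| <= `|y|.
Proof.
wlog y0 : y / 0 <= y.
  move=> hwlog; have [/hwlog//|y0] := leP 0 y.
  by rewrite -normrN -sinN -(normrN y) hwlog // oppr_ge0 ltW.
have hc : {within `[0, y], continuous (@sin R)}.
  by apply: continuous_subspaceT => x; exact: continuous_sin.
have [c _] := @MVT_segment R sin cos 0 y y0 (fun x _ => is_derive_sin x) hc.
rewrite sin0 !subr0 => ->.
by rewrite normrM ler_piMl // cos_max.
Qed.

Lemma normr_1Bcos_le y : `|1 - cos y| <= y ^+ 2 / 2.
Proof.
have -> : cos y = cos ((y / 2) *+ 2) by rewrite -mulr_natr divfK.
rewrite cos_mulr2n cos2sin2.
have := normr_sin_le (y / 2).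
rewrite -(ler_pXn2r (n := 2)) ?nnegrE ?normr_ge0 // !real_normK ?num_real // => hs.
rewrite ger0_norm; last by have := sqr_ge0 (sin (y / 2)); lra.
have -> : y ^+ 2 / 2 = (y / 2) ^+ 2 *+ 2 by rewrite mulr2n; field.
lra.
Qed.

Lemma normr_sinBx_le y : `|sin y - y| <= y ^+ 2.
Proof.
wlog y0 : y / 0 <= y.
  move=> hwlog; have [/hwlog//|y0] := leP 0 y.
  have := hwlog (- y); rewrite sinN sqrrN -opprD normrN.
  by apply; rewrite oppr_ge0 ltW.
have hc : {within `[0, y], continuous (fun x : R => sin x - x)}.
  apply: continuous_subspaceT => x.
  by apply: continuousB; [exact: continuous_sin | exact: cvg_id].
have hd x : x \in `]0, y[%R -> is_derive x 1 (fun x : R => sin x - x) (cos x - 1).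
  by move=> _; apply: is_deriveB.
have [c] := @MVT_segment R _ _ 0 y y0 hd hc.
rewrite in_itv /= => /andP[c0 cy]; rewrite sin0 !subr0 => ->.
rewrite normrM (ger0_norm y0) -normrN opprB.
have [y2|y2] := leP y 2.
- have cy2 : c ^+ 2 <= y ^+ 2 by rewrite ler_pXn2r // nnegrE ltW.
  have := normr_1Bcos_le c; have := normr_ge0 (1 - cos c); nra.
- have : `|1 - cos c| <= 2.
    by apply: le_trans (ler_normB _ _) _; rewrite normr1; have := cos_max c; lra.
  have := normr_ge0 (1 - cos c); nra.
Qed.

Lemma expR_cos_remainder_le a b t : 0 <= t ->
  `|expR (- (a * t)) * cos (b * t) - 1 + a * t|
    <= (a ^+ 2 + b ^+ 2) * t ^+ 2 * expR (`|a| * t).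
Proof.
move=> t0; set u := - (a * t); set v := b * t.
have -> : expR (`|a| * t) = expR `|u| by rewrite normrN normrM (ger0_norm t0).
have -> : expR u * cos v - 1 + a * t
    = (expR u - 1 - u) * cos v - (1 - cos v) * (1 + u) by rewrite /u; ring.
have X1 : 1 <= expR `|u| by rewrite -expR0 ler_expR.
have k1 : `|(expR u - 1 - u) * cos v| <= u ^+ 2 * expR `|u|.
  by rewrite normrM -[leRHS]mulr1 ler_pM ?normr_expRB1Bx_le ?cos_max.
have k2 : `|(1 - cos v) * (1 + u)| <= v ^+ 2 / 2 * expR `|u|.
  rewrite normrM ler_pM ?normr_1Bcos_le //.
  by apply: le_trans (ler_normD _ _) _; rewrite normr1 expR_ge1Dx.
apply: le_trans (ler_normB _ _) _.
have : 0 <= v ^+ 2 * expR `|u| by rewrite mulr_ge0 ?sqr_ge0 ?expR_ge0.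
rewrite /u /v sqrrN !exprMn in k1 k2 *; nra.
Qed.

Lemma expR_sin_remainder_le a b t : 0 <= t ->
  `|expR (- (a * t)) * sin (b * t) - b * t|
    <= 2 * (a ^+ 2 + b ^+ 2) * t ^+ 2 * expR (`|a| * t).
Proof.
move=> t0; set u := - (a * t); set v := b * t.
have -> : expR (`|a| * t) = expR `|u| by rewrite normrN normrM (ger0_norm t0).
have -> : expR u * sin v - v = (expR u - 1) * sin v + (sin v - v) by ring.
have X1 : 1 <= expR `|u| by rewrite -expR0 ler_expR.
have k1 : `|(expR u - 1) * sin v| <= `|u| * `|v| * expR `|u|.
  by rewrite normrM mulrAC ler_pM ?normr_expRB1_le ?normr_sin_le ?mulr_ge0.
have k2 : `|sin v - v| <= v ^+ 2 * expR `|u|.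
  by apply: le_trans (normr_sinBx_le v) _; rewrite ler_peMr ?sqr_ge0.
have amgm : `|u| * `|v| * 2 <= u ^+ 2 + v ^+ 2.
  rewrite -(real_normK (num_real u)) -(real_normK (num_real v)).
  by have := sqr_ge0 (`|u| - `|v|); nra.
apply: le_trans (ler_normD _ _) _.
have : 0 <= u ^+ 2 * expR `|u| by rewrite mulr_ge0 ?sqr_ge0 ?expR_ge0.
have : 0 <= v ^+ 2 * expR `|u| by rewrite mulr_ge0 ?sqr_ge0 ?expR_ge0.
rewrite /u /v sqrrN !exprMn in k1 k2 amgm *; nra.
Qed.

End elementary_bounds.

Section dominated_integrals.
Variable R : realType.
Local Notation mu := (@lebesgue_measure R).
Implicit Types (h g : R -> R) (K : R).

Lemma integrable_dominated h g K :
  measurable_fun setT h -> mu.-integrable setT (EFin \o g) ->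
  (forall t, `|h t| <= K * g t) -> mu.-integrable setT (EFin \o h).
Proof.
move=> mh ig hg; apply: le_integrable (integrableZl measurableT K ig) => //.
- exact/measurable_EFinP.
- by move=> t _ /=; rewrite lee_fin (le_trans (hg t)) ?ler_norm.
Qed.

Lemma normr_Rintegral_le_dominated h g K :
  measurable_fun setT h -> mu.-integrable setT (EFin \o g) ->
  (forall t, `|h t| <= K * g t) ->
  `|Rintegral mu setT h| <= K * Rintegral mu setT g.
Proof.
move=> mh ig hg; have ih := integrable_dominated mh ig hg.
have mg : measurable_fun setT g by have /integrableP[/measurable_EFinP] := ig.
apply: le_trans (le_normr_Rintegral measurableT ih) _.
rewrite -RintegralZl //; apply: le_Rintegral => //.
- apply: integrable_dominated ig _ => [|t]; first exact: measurableT_comp.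
  by rewrite normr_id.
- apply: integrable_dominated ig _ => [|t]; first exact: measurable_funM.
  by rewrite ger0_norm // (le_trans (normr_ge0 _) (hg t)).
Qed.

Lemma integrable_EFinB h g :
  mu.-integrable setT (EFin \o h) -> mu.-integrable setT (EFin \o g) ->
  mu.-integrable setT (EFin \o (fun t => h t - g t)).
Proof. by move=> ih ig; apply: eq_integrable (integrableB _ ih ig) => // t _ /=. Qed.

Lemma integrable_EFinZl K h : mu.-integrable setT (EFin \o h) ->
  mu.-integrable setT (EFin \o (fun t => K * h t)).
Proof. by move=> ih; apply: eq_integrable (integrableZl _ K ih) => // t _ /=. Qed.

Lemma measurable_expR_scale a : measurable_fun setT (fun t : R => expR (- (a * t))).
Proof.
apply: measurableT_comp; first exact: measurable_expR.
by apply: measurable_funN; apply: measurable_funM.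
Qed.

Lemma measurable_comp_scale g b : continuous g ->
  measurable_fun setT (fun t : R => g (b * t)).
Proof.
move=> cg; apply: measurableT_comp; last exact: measurable_funM.
exact: continuous_measurable_fun.
Qed.

End dominated_integrals.

Lemma normc_le_Re_Im (F : rcfType) (z : F[i]) :
  `|z| <= (`|complex.Re z| + `|complex.Im z|)%:C.
Proof.
case: z => x y; rewrite normc_def lecR /=.
have xy0 : 0 <= `|x| + `|y| by rewrite addr_ge0.
rewrite -[leRHS](ger0_norm xy0) -[leRHS]sqrtr_sqr; apply: ler_wsqrtr.
rewrite sqrrD -[x ^+ 2]real_normK ?num_real // -[y ^+ 2]real_normK ?num_real //.
by rewrite mulr2n; have := mulr_ge0 (normr_ge0 x) (normr_ge0 y); lra.
Qed.

Lemma laplace_sub1_linearE (R : realType) (f : R -> R) (a b m : R) :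
  laplace f (a +i* b) - 1 + (a +i* b) * m%:C =
  (Rintegral lebesgue_measure setT (fun t => expR (- (a * t)) * cos (b * t) * f t) - 1 + a * m)
  +i* (- Rintegral lebesgue_measure setT (fun t => expR (- (a * t)) * sin (b * t) * f t) + b * m).
Proof. by rewrite /laplace /=; congr (_ +i* _); ring. Qed.

Definition tail_weight (R : realType) (lambda t : R) : R :=
  (1 + t ^+ 2) * expR (lambda / 2 * t).

(* tail_weight lambda t * C e^(-lambda t) <= C (1 + 64 / lambda^2) e^(-lambda t / 4),
   which is tail_const C lambda times the exponential density of rate lambda / 4. *)
Definition tail_const (R : realType) (C lambda : R) : R :=
  C * (1 + 64 / lambda ^+ 2) * (4 / lambda).

Lemma tail_const_gt0 (R : realType) (C lambda : R) : 0 < C -> 0 < lambda ->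
  0 < tail_const C lambda.
Proof.
move=> C_gt0 l_gt0; have : 0 < 64 / lambda ^+ 2 by rewrite divr_gt0 ?exprn_gt0.
by rewrite /tail_const => ?; rewrite !mulr_gt0 ?invr_gt0 //; lra.
Qed.

Lemma sqrD1_le_expR (R : realType) (lambda t : R) : 0 < lambda -> 0 <= t ->
  1 + t ^+ 2 <= (1 + 64 / lambda ^+ 2) * expR (lambda / 4 * t).
Proof.
move=> l0 t0; set x := lambda / 8 * t.
have hx : x ^+ 2 <= expR (lambda / 4 * t).
  have -> : expR (lambda / 4 * t) = expR x ^+ 2.
    by rewrite -expRM_natl; congr expR; rewrite /x; field.
  have x0 : 0 <= x by rewrite mulr_ge0 // divr_ge0 // ltW.
  by rewrite ler_pXn2r ?nnegrE ?expR_ge0 //; have := expR_ge1Dx x; lra.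
have -> : t ^+ 2 = 64 / lambda ^+ 2 * x ^+ 2 by rewrite /x; field; rewrite gt_eqF.
have : 1 <= expR (lambda / 4 * t).
  by rewrite -expR0 ler_expR mulr_ge0 // divr_ge0 // ltW.
have : 0 <= 64 / lambda ^+ 2 by rewrite divr_ge0 // sqr_ge0.
nra.
Qed.

Section exponential_tail.
Variables (R : realType) (C lambda : R) (f : R -> R).
Hypotheses (lambda_gt0 : 0 < lambda) (mf : measurable_fun setT f).
Hypotheses (f_ge0 : forall t, 0 <= f t) (f_lt0 : forall t, t < 0 -> f t = 0).
Hypothesis f_tail : forall t, 0 <= t -> f t <= C * expR (- (lambda * t)).
Local Notation mu := (@lebesgue_measure R).
Local Notation K := (tail_const C lambda).
Implicit Types a b t : R.

Lemma weighted_le_exponential_pdf (w : R -> R) B :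
  (forall t, 0 <= t -> `|w t| <= B * tail_weight lambda t) ->
  forall t, `|w t * f t| <= B * K * exponential_pdf (lambda / 4) t.
Proof.
move=> hw t; have [tn|t0] := ltP t 0.
  by rewrite f_lt0 // mulr0 normr0 lt0_exponential_pdf // mulr0.
have B0 : 0 <= B.
  have := hw 0 (lexx _); rewrite /tail_weight expr0n addr0 mulr0 expR0 !mulr1.
  exact: le_trans (normr_ge0 _).
have C0 : 0 <= C.
  by have := f_tail (lexx 0); rewrite mulr0 oppr0 expR0 mulr1; apply: le_trans.
rewrite exponential_pdfE // normrM (ger0_norm (f_ge0 t)).
apply: le_trans (ler_pM (normr_ge0 _) (f_ge0 t) (hw t t0) (f_tail t0)) _.
set E := expR (lambda / 2 * t) * expR (- (lambda * t)).
have -> : B * K * (lambda / 4 * expR (- (lambda / 4) * t))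
    = B * C * E * ((1 + 64 / lambda ^+ 2) * expR (lambda / 4 * t)).
  have <- : E * expR (lambda / 4 * t) = expR (- (lambda / 4) * t).
    by rewrite /E -!expRD; congr expR; field.
  by rewrite /tail_const; field; rewrite gt_eqF.
have -> : B * tail_weight lambda t * (C * expR (- (lambda * t)))
    = B * C * E * (1 + t ^+ 2) by rewrite /tail_weight /E; ring.
by rewrite ler_wpM2l ?sqrD1_le_expR // !mulr_ge0 ?expR_ge0.
Qed.

Lemma integrable_weighted (w : R -> R) B : measurable_fun setT w ->
  (forall t, 0 <= t -> `|w t| <= B * tail_weight lambda t) ->
  mu.-integrable setT (EFin \o (fun t => w t * f t)).
Proof.
move=> mw hw; apply: integrable_dominated (weighted_le_exponential_pdf hw).
- exact: measurable_funM.
- by apply: integrable_exponential_pdf; rewrite divr_gt0.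
Qed.

Lemma normr_Rintegral_weighted_le (w : R -> R) B : measurable_fun setT w ->
  (forall t, 0 <= t -> `|w t| <= B * tail_weight lambda t) ->
  `|Rintegral mu setT (fun t => w t * f t)| <= B * K.
Proof.
move=> mw hw; rewrite -[leRHS]mulr1.
have <- : Rintegral mu setT (exponential_pdf (lambda / 4)) = 1.
  by rewrite /Rintegral integral_exponential_pdf ?divr_gt0.
apply: normr_Rintegral_le_dominated (weighted_le_exponential_pdf hw).
- exact: measurable_funM.
- by apply: integrable_exponential_pdf; rewrite divr_gt0.
Qed.

Lemma expR_le_tail_weight a t : `|a| <= lambda / 2 -> 0 <= t ->
  expR (- (a * t)) <= tail_weight lambda t.
Proof.
move=> ha t0; apply: (@le_trans _ _ (expR (lambda / 2 * t))).
  by rewrite ler_expR -mulNr ler_wpM2r // (le_trans _ ha) // -normrN ler_norm.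
by rewrite /tail_weight ler_peMl ?expR_ge0 // lerDl sqr_ge0.
Qed.

Lemma sqr_expR_le_tail_weight a t : `|a| <= lambda / 2 -> 0 <= t ->
  t ^+ 2 * expR (`|a| * t) <= tail_weight lambda t.
Proof.
move=> ha t0; rewrite /tail_weight.
by apply: ler_pM; rewrite ?sqr_ge0 ?expR_ge0 ?lerDr ?ler_expR ?ler_wpM2r.
Qed.

Lemma integrable_mean : mu.-integrable setT (EFin \o (fun t => t * f t)).
Proof.
apply: (integrable_weighted (B := 1)) => // t t0.
rewrite mul1r ger0_norm // /tail_weight.
have : 1 <= expR (lambda / 2 * t).
  by rewrite -expR0 ler_expR mulr_ge0 // divr_ge0 // ltW.
by have := sqr_ge0 (t - 1); nra.
Qed.

Lemma integrable_expR_bounded (g : R -> R) a b : continuous g ->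
  (forall x, `|g x| <= 1) -> `|a| <= lambda / 2 ->
  mu.-integrable setT (EFin \o (fun t => expR (- (a * t)) * g (b * t) * f t)).
Proof.
move=> cg g1 ha.
apply: (integrable_weighted (w := fun t => expR (- (a * t)) * g (b * t)) (B := 1)).
  exact: measurable_funM (measurable_expR_scale a) (measurable_comp_scale b cg).
move=> t t0; rewrite mul1r normrM ger0_norm ?expR_ge0 // -[leRHS]mulr1.
by rewrite ler_pM ?expR_ge0 ?expR_le_tail_weight.
Qed.

Hypothesis If : mu.-integrable setT (EFin \o f).
Hypothesis f_mass1 : Rintegral mu setT f = 1.
Local Notation m := (Rintegral mu setT (fun t => t * f t)).

Lemma laplace_Re_remainder_le a b : `|a| <= lambda / 2 ->
  `|Rintegral mu setT (fun t => expR (- (a * t)) * cos (b * t) * f t) - 1 + a * m|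
    <= (a ^+ 2 + b ^+ 2) * K.
Proof.
move=> ha; have Ic := integrable_expR_bounded b (@continuous_cos R) (@cos_max R) ha.
have <- : Rintegral mu setT (fun t => (expR (- (a * t)) * cos (b * t) - 1 + a * t) * f t)
    = Rintegral mu setT (fun t => expR (- (a * t)) * cos (b * t) * f t) - 1 + a * m.
  under eq_Rintegral do rewrite mulrDl mulrBl mul1r -mulrA.
  rewrite RintegralD ?RintegralB ?RintegralZl ?f_mass1 //.
  - exact: integrable_mean.
  - exact: integrable_EFinB.
  - exact/integrable_EFinZl/integrable_mean.
apply: normr_Rintegral_weighted_le => [|t t0].
  apply: measurable_funD; last exact: measurable_funM.
  apply: measurable_funB => //.
  exact: measurable_funM (measurable_expR_scale a) (measurable_comp_scale b (@continuous_cos R)).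
apply: le_trans (expR_cos_remainder_le a b t0) _.
by rewrite -mulrA ler_wpM2l ?sqr_expR_le_tail_weight ?addr_ge0 ?sqr_ge0.
Qed.

Lemma laplace_Im_remainder_le a b : `|a| <= lambda / 2 ->
  `|- Rintegral mu setT (fun t => expR (- (a * t)) * sin (b * t) * f t) + b * m|
    <= 2 * (a ^+ 2 + b ^+ 2) * K.
Proof.
move=> ha; have Is := integrable_expR_bounded b (@continuous_sin R) (@sin_max R) ha.
rewrite -normrN opprD opprK.
have <- : Rintegral mu setT (fun t => (expR (- (a * t)) * sin (b * t) - b * t) * f t)
    = Rintegral mu setT (fun t => expR (- (a * t)) * sin (b * t) * f t) - b * m.
  under eq_Rintegral => t _ do rewrite mulrBl -[b * t * _]mulrA.
  rewrite RintegralB ?RintegralZl //.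
  - exact: integrable_mean.
  - exact/integrable_EFinZl/integrable_mean.
apply: normr_Rintegral_weighted_le => [|t t0].
  apply: measurable_funB; last exact: measurable_funM.
  exact: measurable_funM (measurable_expR_scale a) (measurable_comp_scale b (@continuous_sin R)).
apply: le_trans (expR_sin_remainder_le a b t0) _.
by rewrite -mulrA ler_wpM2l ?sqr_expR_le_tail_weight ?mulr_ge0 ?addr_ge0 ?sqr_ge0.
Qed.

Lemma normr_laplace_linear_le s : `|complex.Re s| <= lambda / 2 ->
  `|laplace f s - 1 + s * m%:C| <= (3 * K)%:C * `|s| ^+ 2.
Proof.
case: s => a b /= ha; rewrite laplace_sub1_linearE.
apply: le_trans (normc_le_Re_Im _) _; rewrite -add_Re2_Im2 /= -rmorphM lecR.
have := laplace_Re_remainder_le b ha; have := laplace_Im_remainder_le b ha.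
lra.
Qed.

End exponential_tail.

Section mean_lower_bound.
Variables (R : realType) (C : R) (f : R -> R).
Hypotheses (f_ge0 : forall t, 0 <= f t) (f_lt0 : forall t, t < 0 -> f t = 0).
Hypothesis f_leC : forall t, 0 <= t -> f t <= C.
Local Notation mu := (@lebesgue_measure R).

(* Below [t0] the defect [(t0 - t) f t <= C t0] is absorbed by the
   exponential density of mean [t0], which is at least [1 / (e t0)] there. *)
Lemma density_mul_id_ge (t0 t : R) : 0 < t0 ->
  t0 * f t - expR 1 * C * t0 ^+ 2 * exponential_pdf t0^-1 t <= t * f t.
Proof.
move=> t0_gt0; have [tn|t_ge0] := ltP t 0.
  by rewrite f_lt0 // lt0_exponential_pdf // !mulr0 subrr.
have C0 : 0 <= C := le_trans (f_ge0 t) (f_leC t_ge0).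
have t0V_ge0 : 0 <= t0^-1 by rewrite invr_ge0 ltW.
have [tt|tt] := leP t0 t.
  have : 0 <= expR 1 * C * t0 ^+ 2 * exponential_pdf t0^-1 t.
    apply: mulr_ge0; last exact: exponential_pdf_ge0.
    by rewrite !mulr_ge0 ?expR_ge0 ?sqr_ge0 // ltW.
  by have := ler_wpM2r (f_ge0 t) tt; lra.
rewrite exponential_pdfE //.
set E := expR (- t0^-1 * t).
have -> : expR 1 * C * t0 ^+ 2 * (t0^-1 * E) = C * t0 * (expR 1 * E).
  by field; rewrite gt_eqF.
have eE1 : 1 <= expR 1 * E.
  by rewrite /E -expRD -[leLHS]expR0 ler_expR mulNr subr_ge0 ler_pdivrMl // mulr1 ltW.
have : (t0 - t) * f t <= t0 * C by rewrite ler_pM ?f_leC //; lra.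
have := ler_wpM2l (mulr_ge0 C0 (ltW t0_gt0)) eE1.
lra.
Qed.

Lemma density_mean_ge : 0 < C ->
  mu.-integrable setT (EFin \o f) ->
  mu.-integrable setT (EFin \o (fun t => t * f t)) ->
  Rintegral mu setT f = 1 ->
  (4 * expR 1 * C)^-1 <= Rintegral mu setT (fun t => t * f t).
Proof.
move=> C_gt0 If Itf f_mass1; set t0 := (2 * expR 1 * C)^-1.
have t0_gt0 : 0 < t0 by rewrite invr_gt0 !mulr_gt0 ?expR_gt0.
have Ipdf : mu.-integrable setT (EFin \o exponential_pdf t0^-1).
  by apply: integrable_exponential_pdf; rewrite invr_gt0.
have pdf_mass1 : Rintegral mu setT (exponential_pdf t0^-1) = 1.
  by rewrite /Rintegral integral_exponential_pdf // invr_gt0.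
have -> : (4 * expR 1 * C)^-1 = t0 - expR 1 * C * t0 ^+ 2.
  by rewrite /t0; field; rewrite !gt_eqF ?expR_gt0.
have := le_Rintegral measurableT
  (integrable_EFinB (integrable_EFinZl t0 If) (integrable_EFinZl _ Ipdf)) Itf
  (fun t _ => density_mul_id_ge t t0_gt0).
rewrite RintegralB ?RintegralZl //; try exact: integrable_EFinZl.
by rewrite f_mass1 pdf_mass1 !mulr1.
Qed.

End mean_lower_bound.

Lemma linear_approx_lower_bound (F : numDomainType) (z s m d E S : F) :
  0 <= d -> 0 <= E -> `|s| <= S -> d + E * S <= m ->
  `|z + s * m| <= E * `|s| ^+ 2 -> d * `|s| <= `|z|.
Proof.
move=> d0 E0 sS hm hz.
have m0 : 0 <= m by apply: le_trans hm; rewrite addr_ge0 // mulr_ge0 // (le_trans _ sS).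
have h1 : `|s| * m <= `|z + s * m| + `|z|.
  by have := ler_normB (z + s * m) z; rewrite addrC addKr normrM (ger0_norm m0).
have h2 : E * `|s| ^+ 2 <= E * S * `|s|.
  by rewrite expr2 mulrA ler_wpM2r // ler_wpM2l.
have h3 : `|s| * m <= E * S * `|s| + `|z|.
  exact: le_trans h1 (lerD (le_trans hz h2) (lexx _)).
rewrite -(lerD2l (E * S * `|s|)); apply: le_trans h3.
by rewrite addrC -mulrDl mulrC ler_wpM2l.
Qed.

Theorem lemma8 (R : realType) (C lambda : R) (hC : 0 < C) (hl : 0 < lambda) :
  exists S delta : R, 0 < S /\ 0 < delta /\
    forall f : R -> R, is_density_on_nonneg f ->
      (forall t : R, 0 <= t -> f t <= C * expR (- (lambda * t))) ->
      forall s : R[i], `|s| <= S%:C -> delta%:C * `|s| <= `|laplace f s - 1|.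
Proof.
set K := tail_const C lambda; set c := (4 * expR 1 * C)^-1.
have K_gt0 : 0 < K := tail_const_gt0 hC hl.
have c_gt0 : 0 < c by rewrite invr_gt0 !mulr_gt0 ?expR_gt0.
set S := Num.min (lambda / 2) (c / (6 * K)).
exists S, (c / 2).
split; first by rewrite /S lt_min !divr_gt0 // (mulr_gt0 _ K_gt0).
split; first by rewrite divr_gt0.
move=> f [mf f_ge0 f_lt0 If If1] f_tail s sS.
have f_mass1 : Rintegral lebesgue_measure setT f = 1 by rewrite /Rintegral If1.
have f_leC t : 0 <= t -> f t <= C.
  move=> t0; apply: le_trans (f_tail t t0) _.
  by rewrite ler_piMr ?expR_le1 ?oppr_le0 ?mulr_ge0 // ltW.
have Itf := integrable_mean hl mf f_ge0 f_lt0 f_tail.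
have mean_ge := density_mean_ge f_ge0 f_lt0 f_leC hC If Itf f_mass1.
have Re_s : `|complex.Re s| <= lambda / 2.
  by rewrite -lecR (le_trans (normc_ge_Re s)) // (le_trans sS) // lecR /S ge_min lexx.
apply: linear_approx_lower_bound (normr_laplace_linear_le hl mf f_ge0 f_lt0 f_tail If f_mass1 Re_s).
- by rewrite ler0c divr_ge0 ?ltW.
- by rewrite ler0c mulr_ge0 ?ltW.
- exact: sS.
rewrite -rmorphM -rmorphD lecR.
have : S * (6 * K) <= c.
  by rewrite -ler_pdivlMr ?(mulr_gt0 _ K_gt0) // /S ge_min lexx orbT.
rewrite -/K; rewrite -/c in mean_ge; lra.
Qed.
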